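(* Let $A\subseteq\Gamma$ be a finite set, $D=A-A$, $S=A+A$. Then for every integer $k\ge1$, $$\mathsf{E}^D_k(D)\ge|A^{k+1}-\Delta(A)|\ge|A-A|\,|A|^k,$$ $$\sum_xS(x)(S*D)^k(x)\ge|A^{k+1}+\Delta(A)|\ge|A|^k\max\{|A-A|,|A+A|\},$$ $$\mathsf{E}^D_k(S)\ge|A|^{k-1}|A^2+\Delta(A)|\ge|A|^k\max\{|A-A|,|A+A|\}.$$
   Context: $\Gamma$ is an abelian group; sets are identified with indicator functions. $(f*g)(x)=\sum_yf(y)g(x-y)$, $(f\circ g)(x)=\sum_yf(y)g(y+x)$. For a set $X$, $X_s=X\cap(X-s)$, and for $P\subseteq\Gamma$, $\mathsf{E}^P_k(X)=\sum_{s\in P}|X_s|^k=\sum_{s\in P}(X\circ X)(s)^k$. $A^{n}\pm\Delta(A)=\{(a_1\pm a,\dots,a_n\pm a): a_1,\dots,a_n,a\in A\}\subseteq\Gamma^n$. *)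

From HB Require Import structures.
From mathcomp Require Import all_boot all_algebra.
From mathcomp Require Import finmap.
Set Implicit Arguments. Unset Strict Implicit. Unset Printing Implicit Defensive.
Import GRing.Theory.
Local Open Scope fset_scope.
Local Open Scope ring_scope.

(* Gamma is an arbitrary (possibly infinite) abelian group: a zmodType.
   Finite subsets of Gamma are finmap's {fset Gamma}; sets are identified
   with their indicator functions (x \in X : nat). *)

Section Defs.
Variable G : zmodType.

Definition diffset (A B : {fset G}) : {fset G} := [fset a - b | a in A, b in B].
Definition sumset (A B : {fset G}) : {fset G} := [fset a + b | a in A, b in B].

Definition fshift (X : {fset G}) (s : G) : {fset G} := [fset x - s | x in X].
Definition Xsub (X : {fset G}) (s : G) : {fset G} := X `&` fshift X s.

Definition energyP (P X : {fset G}) (k : nat) : nat :=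
  \sum_(s <- P) (#|` Xsub X s| ^ k)%N.

(* (X * Y)(x) = \sum_y X(y) Y(x - y) (only y in X contribute) *)
Definition fconv (X Y : {fset G}) (x : G) : nat :=
  \sum_(y <- X) (((x - y)%R \in Y) : nat).

(* A^n - Delta(A) and A^n + Delta(A), as finite subsets of Gamma^n,
   elements of Gamma^n being represented as {ffun 'I_n -> G}. *)
Definition tupShift (n : nat) (A : {fset G}) (sgn : bool)
  (f : {ffun 'I_n -> A}) (a : A) : {ffun 'I_n -> G} :=
  [ffun i => val (f i) + (if sgn then val a else - val a)].

Definition tupDiag (n : nat) (A : {fset G}) (sgn : bool) : {fset {ffun 'I_n -> G}} :=
  [fset tupShift sgn f a | f in {: {ffun 'I_n -> A}}, a in {: A}].

Definition tupMinusDiag (n : nat) (A : {fset G}) := tupDiag n A false.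
Definition tupPlusDiag (n : nat) (A : {fset G}) := tupDiag n A true.
End Defs.

From HB Require Import structures.
From mathcomp Require Import all_boot all_algebra.
From mathcomp Require Import finmap.
Set Implicit Arguments. Unset Strict Implicit. Unset Printing Implicit Defensive.
Import GRing.Theory.
Local Open Scope fset_scope.
Local Open Scope ring_scope.

(* Every inequality comes from an explicit injection.  A tuple of
   [A^(k+1) - Delta(A)] is determined by its first entry [d], which lies in
   [D], together with the differences [x_j - x_0], which lie in [D_d]; a tuple
   of [A^(k+1) + Delta(A)] is determined by entries lying in [S] whose
   differences with the first entry lie in [D].  Conversely, a tuple of
   [A^n +- Delta(A)] shifted by some [a] can be extended by any entries
   [c_j +- a] with [c_j] in [A], which gives the lower bounds. *)

Lemma leq_card_fset (K : choiceType) (T : finType) (X : {fset K}) (f : T -> K) :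
  injective f -> (forall t, f t \in X) -> (#|T| <= #|` X|)%N.
Proof.
move=> f_inj fX; rewrite cardfE.
have : injective (fun t => [` fX t] : X) by move=> t u /(congr1 val) /f_inj.
exact: leq_card.
Qed.

Lemma leq_card_sum_expn (T : finType) (K1 K2 : choiceType) (D : {fset K1})
    (Y : K1 -> {fset K2}) (m : nat) (g1 : T -> K1) (g2 : T -> 'I_m -> K2) :
    (forall t, g1 t \in D) -> (forall t j, g2 t j \in Y (g1 t)) ->
    (forall t u, g1 t = g1 u -> g2 t =1 g2 u -> t = u) ->
  (#|T| <= \sum_(s <- D) #|` Y s| ^ m)%N.
Proof.
move=> g1D g2Y g_inj.
pose g (t : T) : {s : D & {ffun 'I_m -> Y (val s)}} :=
  existT _ [` g1D t] [ffun j => [` g2Y t j]].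
have : injective g.
  move=> t u e; apply: g_inj => [|j]; first exact: (congr1 (val \o tag) e).
  have := congr1 (fun z : {s : D & {ffun 'I_m -> Y (val s)}} => val (tagged z j)) e.
  by rewrite /= !ffunE.
move/leq_card/leq_trans; apply.
rewrite card_tagged sumnE big_map big_enum /= big_seq_fsetE /=.
by apply: leq_sum => s _; rewrite card_ffun card_ord cardfE.
Qed.

Lemma eq_ffun_ord2 (T : Type) (f g : {ffun 'I_2 -> T}) :
  f ord0 = g ord0 -> f ord_max = g ord_max -> f = g.
Proof.
move=> e0 e1; apply/ffunP => i; case: (unliftP ord0 i) => [j ->|-> //].
by rewrite (ord1 j) (_ : lift ord0 ord0 = ord_max) //; apply: val_inj.
Qed.

Section DiagonalSets.
Variable G : zmodType.
Implicit Types (A X : {fset G}) (sgn : bool).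

Definition signed sgn (a : G) : G := if sgn then a else - a.

Lemma tupDiagP n A sgn (x : {ffun 'I_n -> G}) :
  reflect (exists2 a, a \in A & forall i, x i - signed sgn a \in A)
          (x \in tupDiag n A sgn).
Proof.
apply: (iffP (imfset2P _ _ _ _ _)) => [[f _ [a _ ->]]|[a aA xA]].
  by exists (val a) => [|i]; rewrite ?ffunE ?addrK fsvalP.
exists [ffun i => [` xA i]] => //; exists [` aA] => //.
by apply/ffunP => i; rewrite !ffunE subrK.
Qed.

Lemma tupMinusDiagP n A (x : {ffun 'I_n -> G}) :
  reflect (exists2 a, a \in A & forall i, x i + a \in A) (x \in tupMinusDiag n A).
Proof.
by apply: (iffP (tupDiagP A false x)) => -[a aA xA]; exists a => // i; have := xA i;
  rewrite /signed opprK.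
Qed.

Lemma tupPlusDiagP n A (x : {ffun 'I_n -> G}) :
  reflect (exists2 a, a \in A & forall i, x i - a \in A) (x \in tupPlusDiag n A).
Proof. exact: (tupDiagP A true x). Qed.

Section TupleBase.
Variables (n : nat) (A : {fset G}) (sgn : bool) (x : tupDiag n A sgn).

Let is_base a := (a \in A) && [forall i, val x i - signed sgn a \in A].

Lemma exists_tup_base : exists a, is_base a.
Proof.
have /tupDiagP [a aA xA] := fsvalP x.
by exists a; apply/andP; split => //; apply/forallP.
Qed.

Definition tup_base : G := xchoose exists_tup_base.

Lemma tup_base_mem : tup_base \in A.
Proof. by case/andP: (xchooseP exists_tup_base). Qed.

Lemma tup_base_shift i : val x i - signed sgn tup_base \in A.
Proof. by case/andP: (xchooseP exists_tup_base) => _ /forallP. Qed.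

End TupleBase.

Lemma leq_card_tupDiag1 A sgn :
  (#|` [fset (a + signed sgn b)%R | a in A, b in A]| <= #|` tupDiag 1 A sgn|)%N.
Proof.
rewrite cardfE; apply: (@leq_card_fset _ _ _ (fun z => [ffun=> fsval z])).
  by move=> z w /ffunP /(_ ord0); rewrite !ffunE => /val_inj.
move=> z; have /imfset2P [a aA [b bA ze]] := fsvalP z.
by apply/tupDiagP; exists b => // i; rewrite ffunE ze addrK.
Qed.

Lemma leq_card_tupDiag_mul n m A sgn :
  (#|` tupDiag n A sgn| * #|` A| ^ m <= #|` tupDiag (n + m) A sgn|)%N.
Proof.
have -> : (#|` tupDiag n A sgn| * #|` A| ^ m =
            #|{: tupDiag n A sgn * {ffun 'I_m -> A}}|)%N.
  by rewrite card_prod card_ffun card_ord !cardfE.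
apply: (@leq_card_fset _ _ _ (fun p : tupDiag n A sgn * {ffun 'I_m -> A} =>
  [ffun i => match split i with
             | inl j => val p.1 j
             | inr j => val (p.2 j) + signed sgn (tup_base p.1) end])).
- move=> [x c] [y d] /ffunP e.
  have xy : x = y.
    apply/val_inj/ffunP => j.
    by have := e (lshift m j); rewrite !ffunE (unsplitK (inl j)).
  subst y; congr pair; apply/ffunP => j; apply: val_inj.
  by have := e (rshift n j); rewrite !ffunE (unsplitK (inr j)) => /addIr.
- move=> [x c]; apply/tupDiagP; exists (tup_base x); first exact: tup_base_mem.
  move=> i; rewrite ffunE; case: (split i) => j /=; last by rewrite addrK fsvalP.
  exact: tup_base_shift.
Qed.

Lemma leq_card_tupMinusDiag1_mul A :
  (#|` tupMinusDiag 1 A| * #|` A| <= #|` tupPlusDiag 2 A|)%N.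
Proof.
have -> : (#|` tupMinusDiag 1 A| * #|` A| = #|{: tupMinusDiag 1 A * A}|)%N.
  by rewrite card_prod !cardfE.
apply: (@leq_card_fset _ _ _ (fun p : tupMinusDiag 1 A * A =>
  let v := tup_base p.1 + val p.2 in
  [ffun i : 'I_2 => if i == ord0 then val p.1 ord0 + v else v])).
- move=> [x b] [y c] /ffunP e.
  have := e ord_max; rewrite !ffunE /= => bc.
  have := e ord0; rewrite !ffunE /= bc => /addIr x0y0.
  have xy : x = y by apply/val_inj/ffunP => i; rewrite ord1.
  subst y; congr pair; exact/val_inj/(addrI _ bc).
- move=> [x b]; apply/tupPlusDiagP; exists (val b); first exact: fsvalP.
  move=> i; rewrite ffunE /=; case: ifP => _; rewrite ?addrA addrK.
    by have := tup_base_shift x ord0; rewrite /= opprK.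
  exact: tup_base_mem.
Qed.

Lemma mem_Xsub X s y : (y \in Xsub X s) = (y \in X) && (y + s \in X).
Proof.
rewrite in_fsetI; congr andb; apply/imfsetP/idP => [[x xX ->]|ysX].
  by rewrite subrK.
by exists (y + s); rewrite ?addrK.
Qed.

Lemma fconvE X Y x : fconv X Y x = #|` [fset y in X | x - y \in Y]|.
Proof.
rewrite /fconv card_fset_sum1 -big_fset_condE [RHS]big_mkcond.
by apply: eq_bigr => y _; case: (_ \in _).
Qed.

Section Energies.
Variable A : {fset G}.
Local Notation D := (diffset A A).
Local Notation S := (sumset A A).

Lemma mem_diffset u v : u \in A -> v \in A -> u - v \in D.
Proof. by move=> uA vA; apply/imfset2P; exists u => //; exists v. Qed.

Lemma mem_sumset u v : u \in A -> v \in A -> u + v \in S.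
Proof. by move=> uA vA; apply/imfset2P; exists u => //; exists v. Qed.

Lemma leq_card_tupMinusDiag_energy k :
  (#|` tupMinusDiag k.+1 A| <= energyP D D k)%N.
Proof.
rewrite cardfE; apply: (@leq_card_sum_expn _ _ _ _ _ _
  (fun x : tupMinusDiag k.+1 A => val x ord0)
  (fun x j => val x (lift ord0 j) - val x ord0)).
- move=> x; have /tupMinusDiagP [a aA xA] := fsvalP x.
  by have := mem_diffset (xA ord0) aA; rewrite addrK.
- move=> x j; have /tupMinusDiagP [a aA xA] := fsvalP x.
  rewrite mem_Xsub subrK; apply/andP; split.
    have := mem_diffset (xA (lift ord0 j)) (xA ord0).
    by rewrite opprD addrACA subrr addr0.
  by have := mem_diffset (xA (lift ord0 j)) aA; rewrite addrK.
- move=> x y e0 e; apply/val_inj/ffunP => i; case: (unliftP ord0 i) => [j ->|-> //].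
  by move: (e j); rewrite e0 => /addIr.
Qed.

Lemma leq_card_tupPlusDiag_conv k :
  (#|` tupPlusDiag k.+1 A| <= \sum_(x <- S) (fconv S D x ^ k)%N)%N.
Proof.
under eq_bigr do rewrite fconvE.
rewrite cardfE; apply: (@leq_card_sum_expn _ _ _ _ _ _
  (fun x : tupPlusDiag k.+1 A => val x ord0) (fun x j => val x (lift ord0 j))).
- move=> x; have /tupPlusDiagP [a aA xA] := fsvalP x.
  by have := mem_sumset (xA ord0) aA; rewrite subrK.
- move=> x j; have /tupPlusDiagP [a aA xA] := fsvalP x.
  rewrite !inE /=; apply/andP; split.
    by have := mem_sumset (xA (lift ord0 j)) aA; rewrite subrK.
  by have := mem_diffset (xA ord0) (xA (lift ord0 j)); rewrite opprB addrA subrK.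
- move=> x y e0 e; apply/val_inj/ffunP => i; case: (unliftP ord0 i) => [j ->|-> //].
  exact: e.
Qed.

Lemma leq_card_tupPlusDiag2_energy k :
  (#|` A| ^ k * #|` tupPlusDiag 2 A| <= energyP D S k.+1)%N.
Proof.
have -> : (#|` A| ^ k * #|` tupPlusDiag 2 A| =
           #|{: {ffun 'I_k -> A} * tupPlusDiag 2 A}|)%N.
  by rewrite card_prod card_ffun card_ord !cardfE.
pose diff (t : {ffun 'I_k -> A} * tupPlusDiag 2 A) := val t.2 ord_max - val t.2 ord0.
apply: (@leq_card_sum_expn _ _ _ _ _ (1 + k) diff (fun t j =>
  match split j with
  | inl _ => val t.2 ord0
  | inr j => val t.2 ord0 - tup_base t.2 + val (t.1 j) end)).
- move=> [c x]; have := mem_diffset (tup_base_shift x ord_max) (tup_base_shift x ord0).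
  by rewrite opprB addrA subrK.
- move=> [c x] j; rewrite mem_Xsub /diff /=.
  have xA := tup_base_shift x; rewrite /signed in xA.
  have xS i : val x i \in S.
    by rewrite -(subrK (tup_base x) (val x i)) mem_sumset ?tup_base_mem.
  case: (split j) => {}j; first by rewrite addrC subrK !xS.
  (* [x0 - w] and [x1 - w] lie in [A] and differ by [diff (c, x)]. *)
  set w := tup_base x; set x0 := fsval x ord0; set x1 := fsval x ord_max.
  have -> : x0 - w + val (c j) + (x1 - x0) = x1 - w + val (c j).
    by rewrite addrAC [x0 - w + _]addrC addrA subrK.
  by apply/andP; split; apply: mem_sumset; rewrite ?fsvalP //; apply: xA.
- move=> [c x] [d y] ediff e.
  have e0 := e (lshift k ord0); rewrite /= (unsplitK (inl ord0)) in e0.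
  have xy : x = y.
    by apply/val_inj/eq_ffun_ord2 => //; move: ediff; rewrite /diff /= e0 => /addIr.
  subst y; congr pair; apply/ffunP => j; apply: val_inj.
  by have := e (rshift 1 j); rewrite /= (unsplitK (inr j)) => /addrI.
Qed.

End Energies.
End DiagonalSets.

Theorem proposition5 (G : zmodType) (A : {fset G}) (k : nat) :
  (0 < k)%N ->
  let D := diffset A A in
  let S := sumset A A in
  ((#|` tupMinusDiag k.+1 A| <= energyP D D k)%N /\
   (#|` D| * #|` A| ^ k <= #|` tupMinusDiag k.+1 A|)%N) /\
  ((#|` tupPlusDiag k.+1 A| <= \sum_(x <- S) (fconv S D x ^ k)%N)%N /\
   (#|` A| ^ k * maxn #|` D| #|` S| <= #|` tupPlusDiag k.+1 A|)%N) /\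
  ((#|` A| ^ k.-1 * #|` tupPlusDiag 2 A| <= energyP D S k)%N /\
   (#|` A| ^ k * maxn #|` D| #|` S| <= #|` A| ^ k.-1 * #|` tupPlusDiag 2 A|)%N).
Proof.
case: k => // k _ D S.
have D_le : (#|` D| <= #|` tupMinusDiag 1 A|)%N := leq_card_tupDiag1 A false.
have S_le : (#|` S| <= #|` tupPlusDiag 1 A|)%N := leq_card_tupDiag1 A true.
have max_le : (#|` A| ^ k.+1 * maxn #|` D| #|` S| <=
               #|` A| ^ k * #|` tupPlusDiag 2 A|)%N.
  rewrite expnS -mulnA mulnCA; apply: leq_mul => //.
  rewrite mulnC maxnMl geq_max; apply/andP; split.
    exact: leq_trans (leq_mul D_le (leqnn _)) (leq_card_tupMinusDiag1_mul A).
  apply: leq_trans (leq_mul S_le (leqnn _)) _.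
  by have := leq_card_tupDiag_mul 1 1 A true; rewrite expn1.
split; [split | split; [split | split]].
- exact: leq_card_tupMinusDiag_energy.
- exact: leq_trans (leq_mul D_le (leqnn _)) (leq_card_tupDiag_mul 1 k.+1 A false).
- exact: leq_card_tupPlusDiag_conv.
- apply: leq_trans max_le _; rewrite mulnC.
  exact: leq_card_tupDiag_mul 2 k A true.
- exact: leq_card_tupPlusDiag2_energy.
- exact: max_le.
Qed.
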